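(* Let $d\ge2$, $\Psi(\mathbf x)=-\sum_{i=1}^d\ln\bar x_i$ and $f(\mathbf w)=-\log\langle\mathbf r,\bar{\mathbf w}\rangle$ for some $\mathbf r\in[0,1]^d\setminus\{\mathbf 0\}$. Then for all $\mu\in(0,1)$ and all $\tilde{\mathbf w}\in\mathcal C_{d-1}$ with $\bar{\tilde w}_i>0$ for all $i\in\{1,\dots,d\}$, setting $\mathbf w=(1-\mu)\tilde{\mathbf w}+\mu\mathbf 1/d$, we have $$\nabla f(\mathbf w)\nabla f(\mathbf w)^\top\preceq(1-\mu)^{-2}\nabla^2\Psi(\tilde{\mathbf w}),$$ and furthermore $\|\nabla f(\mathbf w)\|^2_{\nabla^{-2}\Psi(\tilde{\mathbf w})}\le(1-\mu)^{-2}$.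
   Context: $\mathcal C_{d-1}=\{\mathbf u\in\mathbb R^{d-1}:u_i\ge0,\ \sum_iu_i\le1\}$. For $\mathbf v\in\mathbb R^{d-1}$, $\bar{\mathbf v}=(v_1,\dots,v_{d-1},1-\sum_{i=1}^{d-1}v_i)\in\mathbb R^d$. $\mathbf 1$ is the all-ones vector in $\mathbb R^{d-1}$, $\preceq$ is the Loewner order, $\|\mathbf x\|_A=\sqrt{\mathbf x^\top A\mathbf x}$, and $\nabla^{-2}\Psi(\tilde{\mathbf w})=(\nabla^2\Psi(\tilde{\mathbf w}))^{-1}$. *)

From HB Require Import structures.
From mathcomp Require Import all_boot all_order all_algebra.
From mathcomp Require Import all_classical all_reals all_analysis.
Set Implicit Arguments. Unset Strict Implicit. Unset Printing Implicit Defensive.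
Import Order.TTheory GRing.Theory Num.Theory.
Import numFieldNormedType.Exports.
Local Open Scope ring_scope.

(* bar v = (v_1, ..., v_{d-1}, 1 - sum_i v_i) *)
Definition bar (R : pzRingType) (d : nat) (v : 'rV[R]_(d.-1)) : 'rV[R]_d :=
  \row_(i < d) match (insub (nat_of_ord i) : option 'I_(d.-1)) with
               | Some j => v 0 j
               | None => 1 - \sum_(j < d.-1) v 0 j
               end.

Definition in_simplex (R : realDomainType) (n : nat) (u : 'rV[R]_n) : Prop :=
  (forall i, 0 <= u 0 i) /\ \sum_i u 0 i <= 1.

Definition ebasis (R : pzRingType) (n : nat) (i : 'I_n) : 'rV[R]_n := delta_mx 0 i.

Definition grad (R : realType) (n : nat) (g : 'rV[R]_n -> R^o) (x : 'rV[R]_n)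
  : 'cV[R]_n := \col_(i < n) ('D_(@ebasis R n i) g) x.

Definition hess (R : realType) (n : nat) (g : 'rV[R]_n -> R^o) (x : 'rV[R]_n)
  : 'M[R]_n := \matrix_(i < n, j < n) ('D_(@ebasis R n j) ('D_(@ebasis R n i) g)) x.

Definition loewner_le (R : realDomainType) (n : nat) (A B : 'M[R]_n) : Prop :=
  forall x : 'cV[R]_n, 0 <= ((x^T *m (B - A) *m x) 0 0).

Definition mxnorm (R : rcfType) (n : nat) (A : 'M[R]_n) (x : 'cV[R]_n) : R :=
  Num.sqrt ((x^T *m A *m x) 0 0).

Definition Psi (R : realType) (d : nat) (x : 'rV[R]_(d.-1)) : R :=
  - \sum_(i < d) ln (bar x 0 i).

Definition floss (R : realType) (d : nat) (r : 'rV[R]_d) (w : 'rV[R]_(d.-1)) : R :=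
  - ln (\sum_(i < d) r 0 i * bar w 0 i).

From HB Require Import structures.
From mathcomp Require Import all_boot all_order all_algebra.
From mathcomp Require Import all_classical all_reals all_analysis.
From mathcomp Require Import ring lra.
Set Implicit Arguments. Unset Strict Implicit. Unset Printing Implicit Defensive.
Import Order.TTheory GRing.Theory Num.Theory.
Import numFieldNormedType.Exports.
Local Open Scope ring_scope.

(* The map bar is affine with linear part bar_lin, so along every line both Psi
   and f are sums of logarithms of affine functions.  Hence, for a direction x
   and y := bar_lin x,
     x^T (hess Psi wt) x = sum_k (y_k / bar wt_k)^2,
     x^T (grad f w)      = - <r, y> / <r, bar w>.
   Since bar w = (1 - mu) bar wt + mu / d >= (1 - mu) bar wt and r >= 0,
     |<r, y>| <= max_k |y_k / bar wt_k| <r, bar wt>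
              <= (1 - mu)^-1 sqrt (x^T (hess Psi wt) x) <r, bar w>,
   which is the Loewner bound.  The Hessian is positive definite because
   bar_lin is injective, and testing the Loewner bound at
   x = (hess Psi wt)^-1 (grad f w) gives q^2 <= (1 - mu)^-2 q for the squared
   norm q, whence q <= (1 - mu)^-2. *)

Section QuadraticForms.
Variables (R : realFieldType) (n : nat).
Implicit Types (A : 'M[R]_n) (x g : 'cV[R]_n).

Lemma mxdotE x g : (x^T *m g) 0 0 = \sum_i x i 0 * g i 0.
Proof. by rewrite mxE; apply: eq_bigr => i _; rewrite mxE. Qed.

Lemma mxdotC x g : (x^T *m g) 0 0 = (g^T *m x) 0 0.
Proof. by rewrite !mxdotE; apply: eq_bigr => i _; rewrite mulrC. Qed.

Lemma mxquadE A x : (x^T *m A *m x) 0 0 = \sum_i \sum_j x i 0 * A i j * x j 0.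
Proof.
rewrite mxE exchange_big /=; apply: eq_bigr => j _; rewrite mxE mulr_suml.
by apply: eq_bigr => i _; rewrite mxE.
Qed.

Lemma mxquad_gram m A (l : 'I_n -> 'I_m -> R) (c : 'I_m -> R) x :
  (forall i j, A i j = \sum_k l i k * l j k * c k) ->
  (x^T *m A *m x) 0 0 = \sum_k (\sum_i x i 0 * l i k) ^+ 2 * c k.
Proof.
move=> A_gram; rewrite mxquadE.
transitivity (\sum_k \sum_i \sum_j x i 0 * l i k * (x j 0 * l j k) * c k).
  rewrite [RHS]exchange_big; apply: eq_bigr => i _ /=.
  rewrite [RHS]exchange_big; apply: eq_bigr => j _ /=.
  rewrite A_gram mulr_sumr mulr_suml; apply: eq_bigr => k _; ring.
apply: eq_bigr => k _; rewrite expr2 big_distrlr mulr_suml.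
by apply: eq_bigr => i _; rewrite mulr_suml.
Qed.

Lemma loewner_le_rank1 c A g :
  (forall x, (x^T *m g) 0 0 ^+ 2 <= c * (x^T *m A *m x) 0 0) ->
  loewner_le (g *m g^T) (c *: A).
Proof.
move=> le_gA x; rewrite mulmxBr mulmxBl -scalemxAr -scalemxAl mulmxA -(mulmxA _ g^T).
rewrite [X in _ <= X]mxE [X in _ + X]mxE [X in _ <= X - _]mxE subr_ge0 mxE big_ord1.
by rewrite [(g^T *m x) 0 0]mxdotC -expr2; exact: le_gA.
Qed.

Lemma posdef_unitmx A :
  (forall x, (x^T *m A *m x) 0 0 = 0 -> x = 0) -> A \in unitmx.
Proof.
move=> A_posdef; rewrite -row_free_unit -kermx_eq0.
apply/eqP/row_matrixP => i; rewrite row0.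
set u := row i (kermx A).
have uA : u *m A = 0 by apply/sub_kermxP; exact: row_sub.
have : u^T = 0 by apply: A_posdef; rewrite trmxK uA mul0mx mxE.
by move/(congr1 trmx); rewrite trmxK trmx0.
Qed.

Lemma invmx_quad_bound c A g : 0 <= c -> A \in unitmx ->
  (forall x, (x^T *m g) 0 0 ^+ 2 <= c * (x^T *m A *m x) 0 0) ->
  0 <= (g^T *m invmx A *m g) 0 0 <= c.
Proof.
move=> c_ge0 A_unit le_gA; set v := invmx A *m g.
have Av : A *m v = g by rewrite mulmxA mulmxV // mul1mx.
have := le_gA v; rewrite -mulmxA Av mxdotC -mulmxA -/v.
set q := (g^T *m v) 0 0 => q_le.
apply/andP; split; nra.
Qed.

End QuadraticForms.

Section WeightedSums.
Variables (R : rcfType) (I : finType).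
Implicit Types (r a b : I -> R).

Lemma wsum_gt0 r b : (forall k, 0 <= r k) -> (exists k, 0 < r k) ->
  (forall k, 0 < b k) -> 0 < \sum_k r k * b k.
Proof.
move=> r_ge0 [k0 rk0_gt0] b_gt0; rewrite (bigD1 k0) //=.
apply: ltr_pwDl; first exact: mulr_gt0.
by apply: sumr_ge0 => k _; exact: mulr_ge0 (r_ge0 k) (ltW (b_gt0 k)).
Qed.

Lemma sqr_wsum_le r a b : (forall k, 0 <= r k) -> (forall k, 0 < b k) ->
  (\sum_k r k * a k) ^+ 2 <= (\sum_k (a k / b k) ^+ 2) * (\sum_k r k * b k) ^+ 2.
Proof.
move=> r_ge0 b_gt0; set Q := \sum_k (a k / b k) ^+ 2; set T := \sum_k r k * b k.
have Q_ge0 : 0 <= Q by apply: sumr_ge0 => k _; exact: sqr_ge0.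
have rb_ge0 k : 0 <= r k * b k by exact: mulr_ge0 (r_ge0 k) (ltW (b_gt0 k)).
have ratio_le k : `|a k / b k| <= Num.sqrt Q.
  rewrite -sqrtr_sqr ler_sqrt // /Q (bigD1 k) //= lerDl.
  by apply: sumr_ge0 => j _; exact: sqr_ge0.
have sum_le : `|\sum_k r k * a k| <= Num.sqrt Q * T.
  apply: le_trans (ler_norm_sum _ _ _) _; rewrite /T mulr_sumr.
  apply: ler_sum => k _.
  have -> : r k * a k = r k * b k * (a k / b k).
    by rewrite -mulrA [b k * _]mulrC divfK ?gt_eqF.
  rewrite normrM ger0_norm // [X in _ <= X]mulrC.
  exact: ler_wpM2l (rb_ge0 k) _ _ (ratio_le k).
rewrite -real_normK ?num_real // -(sqr_sqrtr Q_ge0) -exprMn.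
by rewrite lerXn2r ?nnegrE ?mulr_ge0 ?sqrtr_ge0 ?sumr_ge0.
Qed.

End WeightedSums.

Section BarAffine.
Variables (R : realType) (n : nat).
Local Notation bar := (@bar R n.+1).

Definition bar_lin (y : 'rV[R]_n) (k : 'I_n.+1) : R :=
  match (insub (nat_of_ord k) : option 'I_n) with
  | Some j => y 0 j
  | None => - \sum_j y 0 j
  end.

Lemma bar_affine (x y : 'rV[R]_n) (h : R) k :
  bar (h *: y + x) 0 k = bar x 0 k + h * bar_lin y k.
Proof.
rewrite /bar /bar_lin !mxE; case: insub => [j|]; rewrite ?mxE /= 1?addrC //.
under eq_bigr do rewrite !mxE.
by rewrite big_split /= -mulr_sumr; ring.
Qed.

Lemma bar_convex (x y : 'rV[R]_n) (t : R) k :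
  bar ((1 - t) *: x + t *: y) 0 k = (1 - t) * bar x 0 k + t * bar y 0 k.
Proof.
rewrite /bar !mxE; case: insub => [j|]; rewrite ?mxE //.
under eq_bigr do rewrite !mxE.
by rewrite big_split /= -!mulr_sumr; ring.
Qed.

Lemma bar_uniform k : bar (const_mx (n.+1)%:R^-1) 0 k = (n.+1)%:R^-1.
Proof.
rewrite /bar !mxE; case: insub => [j|]; rewrite ?mxE //.
under eq_bigr do rewrite mxE.
have n1_neq0 : (n.+1)%:R != 0 :> R by rewrite pnatr_eq0.
by rewrite sumr_const card_ord -mulr_natr -natr1; field; rewrite natr1.
Qed.

Lemma bar_lin_widen (y : 'rV[R]_n) j : bar_lin y (widen_ord (leqnSn n) j) = y 0 j.
Proof.
rewrite /bar_lin; case: insubP => [u _ /= uj|]; last by rewrite /= ltn_ord.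
by congr (y 0 _); apply: val_inj.
Qed.

Lemma bar_lin_coord (y : 'rV[R]_n) k :
  bar_lin y k = \sum_j y 0 j * bar_lin (@ebasis R n j) k.
Proof.
rewrite /bar_lin /ebasis; case: insub => [i|].
  rewrite (bigD1 i) //= big1 ?addr0; first by rewrite mxE !eqxx mulr1.
  by move=> j /negbTE ji; rewrite mxE eq_sym ji andbF mulr0.
rewrite -sumrN; apply: eq_bigr => j _.
rewrite (bigD1 j) //= big1 ?addr0; first by rewrite mxE !eqxx mulrN1.
by move=> i /negbTE ij; rewrite mxE ij andbF.
Qed.

End BarAffine.

Section LineDerivatives.
Variable R : realType.
Local Open Scope classical_set_scope.

Lemma derive_alongE (V W : normedModType R) (f : V -> W) (x v : V) :
  'D_v f x = 'D_1 (fun h : R => f (h *: v + x)) 0.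
Proof.
rewrite /derive; set lhs := fun h => h^-1 *: _; set rhs := fun h => h^-1 *: _.
suff -> : lhs = rhs by [].
by apply/funext => h; rewrite /lhs /rhs /= addr0 scale0r add0r [_%:A]mulr1.
Qed.

Lemma is_derive_sumr (V W : normedModType R) m (F : 'I_m -> V -> W) (dF : 'I_m -> W)
    (x v : V) :
  (forall k, is_derive x v (F k) (dF k)) ->
  is_derive x v (fun t => \sum_k F k t) (\sum_k dF k).
Proof. by move/is_derive_sum; rewrite fct_sumE. Qed.

Lemma is_derive_affine (b c : R) : is_derive (0 : R) 1 (fun t : R => b + t * c) c.
Proof.
have -> : (fun t : R => b + t * c) = cst b + c \*: id.
  by apply/funext => t /=; rewrite mulrC.
by apply: is_derive_eq; rewrite [_%:A]mulr1 add0r.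
Qed.

Lemma is_derive_ln_affine (b c : R) : 0 < b ->
  is_derive (0 : R) 1 (fun t : R => ln (b + t * c)) (c / b).
Proof.
move=> b_gt0; have ln_b : is_derive (b + 0 * c) 1 (@ln R) b^-1.
  by rewrite /= mul0r addr0; exact: is_derive1_ln.
rewrite [c / b]mulrC.
exact: (@is_derive1_comp _ _ (fun t => b + t * c) _ _ _ ln_b (is_derive_affine b c)).
Qed.

Lemma is_derive_inv_affine (b c : R) : b != 0 ->
  is_derive (0 : R) 1 (fun t : R => (b + t * c)^-1) (- (c / b ^+ 2)).
Proof.
move=> b_neq0; have := @is_deriveV _ (fun t => b + t * c) 0 c 1.
rewrite /= mul0r addr0 => /(_ b_neq0 (is_derive_affine b c)).
by rewrite [_ *: _]mulrC mulrN.
Qed.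

Lemma near0_affine_gt0 (b c : R) : 0 < b -> \forall h \near (0 : R), 0 < b + h * c.
Proof.
move=> b_gt0; have affine_cvg : b + h * c @[h --> (0 : R)] --> b + 0 * c.
  by apply: cvgD; [exact: cvg_cst | exact: cvgMr_tmp cvg_id].
by rewrite mul0r addr0 in affine_cvg; exact: cvgr_gt affine_cvg _ b_gt0.
Qed.

End LineDerivatives.

Section PsiFloss.
Variables (R : realType) (n : nat).
Local Notation bar := (@bar R n.+1).
Local Notation Psi := (@Psi R n.+1).
Local Notation e := (@ebasis R n).

Lemma derive_Psi (y v : 'rV[R]_n) : (forall k, 0 < bar y 0 k) ->
  'D_v Psi y = - \sum_k bar_lin v k / bar y 0 k.
Proof.
move=> bar_y_gt0; rewrite derive_alongE.
have -> : (fun h : R => Psi (h *: v + y)) =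
          (fun h => - \sum_k ln (bar y 0 k + h * bar_lin v k)).
  by apply/funext => h; rewrite /Psi; under eq_bigr do rewrite bar_affine.
apply: derive_val; apply: is_deriveN; apply: is_derive_sumr => k.
exact: is_derive_ln_affine.
Qed.

Lemma hess_PsiE (y : 'rV[R]_n) i j : (forall k, 0 < bar y 0 k) ->
  hess Psi y i j = \sum_k bar_lin (e i) k * bar_lin (e j) k * (bar y 0 k ^+ 2)^-1.
Proof.
move=> bar_y_gt0; rewrite /hess mxE derive_alongE.
pose G h := - \sum_k bar_lin (e i) k * (bar y 0 k + h * bar_lin (e j) k)^-1.
have near_bar_gt0 : \forall h \near (0 : R), forall k, 0 < bar y 0 k + h * bar_lin (e j) k.
  by apply: (@filter_forall _ _ _ (nbhs (0 : R)) _) => k; exact: near0_affine_gt0.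
rewrite (@near_eq_derive _ _ _ _ G); last first.
  apply: filterS near_bar_gt0 => h bar_h_gt0.
  rewrite derive_Psi => [|k]; last by rewrite bar_affine.
  by congr (- _); apply: eq_bigr => k _; rewrite bar_affine.
have G_derive : is_derive (0 : R) 1 G
    (- \sum_k bar_lin (e i) k * - (bar_lin (e j) k / bar y 0 k ^+ 2)).
  apply: is_deriveN; apply: is_derive_sumr => k; apply: is_deriveZ.
  by apply: is_derive_inv_affine; rewrite gt_eqF.
rewrite (derive_val (is_derive := G_derive)) -sumrN.
by apply: eq_bigr => k _; rewrite mulrN opprK mulrA.
Qed.

Lemma grad_flossE (r : 'rV[R]_n.+1) (w : 'rV[R]_n) i :
  0 < \sum_k r 0 k * bar w 0 k ->
  grad (floss r) w i 0 =
    - ((\sum_k r 0 k * bar_lin (e i) k) / \sum_k r 0 k * bar w 0 k).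
Proof.
move=> S_gt0; rewrite /grad mxE derive_alongE.
have -> : (fun h : R => floss r (h *: e i + w)) =
  (fun h => - ln (\sum_k r 0 k * bar w 0 k + h * \sum_k r 0 k * bar_lin (e i) k)).
  apply/funext => h; rewrite /floss mulr_sumr -big_split /=.
  by congr (- ln _); apply: eq_bigr => k _; rewrite bar_affine; ring.
by apply: derive_val; apply: is_deriveN; exact: is_derive_ln_affine.
Qed.

End PsiFloss.

Section HessianGradientForms.
Variables (R : realType) (n : nat).
Local Notation bar := (@bar R n.+1).
Local Notation Psi := (@Psi R n.+1).
Local Notation e := (@ebasis R n).
Implicit Types (x : 'cV[R]_n) (y w : 'rV[R]_n) (r : 'rV[R]_n.+1).

Lemma hess_Psi_quad y x : (forall k, 0 < bar y 0 k) ->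
  (x^T *m hess Psi y *m x) 0 0 = \sum_k (bar_lin x^T k / bar y 0 k) ^+ 2.
Proof.
move=> bar_y_gt0; rewrite (mxquad_gram _ (fun i j => hess_PsiE i j bar_y_gt0)).
apply: eq_bigr => k _; rewrite expr_div_n bar_lin_coord.
by under [in RHS]eq_bigr do rewrite mxE.
Qed.

Lemma hess_Psi_unitmx y : (forall k, 0 < bar y 0 k) -> hess Psi y \in unitmx.
Proof.
move=> bar_y_gt0; apply: posdef_unitmx => x.
rewrite hess_Psi_quad // => /psumr_eq0P quad_eq0.
apply/matrixP => j i; rewrite ord1 mxE.
have := quad_eq0 (fun k _ => sqr_ge0 _) (widen_ord (leqnSn n) j) isT.
rewrite bar_lin_widen mxE => /eqP.
by rewrite sqrf_eq0 mulf_eq0 invr_eq0 (gt_eqF (bar_y_gt0 _)) orbF => /eqP.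
Qed.

Lemma grad_floss_dot r w x : 0 < \sum_k r 0 k * bar w 0 k ->
  (x^T *m grad (floss r) w) 0 0 =
    - ((\sum_k r 0 k * bar_lin x^T k) / \sum_k r 0 k * bar w 0 k).
Proof.
move=> S_gt0; rewrite mxdotE.
under eq_bigr do rewrite grad_flossE // mulrN mulrA mulr_sumr.
rewrite sumrN -mulr_suml exchange_big /=; congr (- (_ / _)).
apply: eq_bigr => k _; rewrite bar_lin_coord mulr_sumr.
by apply: eq_bigr => j _; rewrite mxE; ring.
Qed.

Lemma grad_floss_sqr_le r wt w c x : 0 < c ->
  (forall k, 0 < bar wt 0 k) -> (forall k, c * bar wt 0 k <= bar w 0 k) ->
  (forall k, 0 <= r 0 k) -> r != 0 ->
  (x^T *m grad (floss r) w) 0 0 ^+ 2 <= c ^- 2 * (x^T *m hess Psi wt *m x) 0 0.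
Proof.
move=> c_gt0 bar_wt_gt0 bar_w_ge r_ge0 /rV0Pn[k0 rk0_neq0].
have rk0_gt0 : 0 < r 0 k0 by rewrite lt_def rk0_neq0 r_ge0.
set T := \sum_k r 0 k * bar wt 0 k; set S := \sum_k r 0 k * bar w 0 k.
have T_gt0 : 0 < T by apply: wsum_gt0 => //; exists k0.
have cT_le : c * T <= S.
  rewrite mulr_sumr; apply: ler_sum => k _; rewrite mulrCA.
  exact: ler_wpM2l (r_ge0 k) _ _ (bar_w_ge k).
have S_gt0 : 0 < S := lt_le_trans (mulr_gt0 c_gt0 T_gt0) cT_le.
rewrite grad_floss_dot // hess_Psi_quad // sqrrN expr_div_n.
set Q := \sum_k (bar_lin x^T k / bar wt 0 k) ^+ 2.
have Q_ge0 : 0 <= Q by apply: sumr_ge0 => k _; exact: sqr_ge0.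
have T2_le : T ^+ 2 <= c ^- 2 * S ^+ 2.
  rewrite mulrC ler_pdivlMr ?exprn_gt0 // -exprMn [T * c]mulrC.
  by rewrite ler_sqr ?nnegrE ?(ltW S_gt0) ?(ltW (mulr_gt0 c_gt0 T_gt0)).
rewrite ler_pdivrMr ?exprn_gt0 // (le_trans (sqr_wsum_le _ r_ge0 bar_wt_gt0)) //.
by rewrite mulrAC mulrC ler_wpM2r.
Qed.

End HessianGradientForms.

Theorem lemma13 (R : realType) (d : nat) (r : 'rV[R]_d) (mu : R)
    (wt : 'rV[R]_(d.-1)) :
  (2 <= d)%N ->
  (forall i, 0 <= r 0 i <= 1) -> r != 0 ->
  0 < mu < 1 ->
  in_simplex wt -> (forall i, 0 < bar wt 0 i) ->
  let w := (1 - mu) *: wt + mu *: const_mx (d%:R^-1) in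
  loewner_le (grad (floss r) w *m (grad (floss r) w)^T)
             ((1 - mu) ^- 2 *: hess (@Psi R d) wt)
  /\ mxnorm (invmx (hess (@Psi R d) wt)) (grad (floss r) w) ^+ 2 <= (1 - mu) ^- 2.
Proof.
case: d r wt => [|[|n]] // r wt _ r_range r_neq0 /andP[mu_gt0 mu_lt1] _ bar_wt_gt0 w.
have c_gt0 : 0 < 1 - mu by rewrite subr_gt0.
have r_ge0 k : 0 <= r 0 k by case/andP: (r_range k).
have bar_w_ge k : (1 - mu) * bar wt 0 k <= bar w 0 k.
  by rewrite bar_convex bar_uniform lerDl mulr_ge0 ?invr_ge0 ?ltW.
have grad_le := grad_floss_sqr_le _ c_gt0 bar_wt_gt0 bar_w_ge r_ge0 r_neq0.
split; first exact: loewner_le_rank1.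
have c2_ge0 : 0 <= (1 - mu) ^- 2 by rewrite invr_ge0 exprn_ge0 // ltW.
have /andP[q_ge0 q_le] := invmx_quad_bound c2_ge0 (hess_Psi_unitmx bar_wt_gt0) grad_le.
by rewrite /mxnorm sqr_sqrtr.
Qed.
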